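(* Suppose $f$ is twice differentiable at every point of $\mathbb{R}^{n\times p}$, and let $X\in\mathcal{S}_{n,p}$ satisfy $\nabla h(X)=0$. Then for every $D_1\in\mathcal{T}_X$ and $D_2\in\mathcal{N}_X$, $$\langle D_2,\nabla^2h(X)[D_2]\rangle\ge(2\beta-M_2)\|D_2\|_F^2,\qquad \langle D_1,\nabla^2h(X)[D_2]\rangle=0 .$$
   Context: $f:\mathbb{R}^{n\times p}\to\mathbb{R}$ is differentiable with $f,\nabla f$ locally Lipschitz. $\langle A,B\rangle=\mathrm{tr}(A^\top B)$, $\Phi(M):=\frac12(M+M^\top)$. $\mathcal{S}_{n,p}=\{X:X^\top X=I_p\}$; for $X\in\mathcal{S}_{n,p}$, $\mathcal{T}_X:=\{D:\Phi(D^\top X)=0\}$ and $\mathcal{N}_X:=\{X\Lambda:\Lambda\in\mathbb{R}^{p\times p},\ \Lambda=\Lambda^\top\}$. $\mathcal{A}(X):=\frac32I_p-\frac12X^\top X$, $g(X):=f(X\mathcal{A}(X))$, $h(X):=g(X)+\frac\beta4\|X^\top X-I_p\|_F^2$ with $\beta>0$. $\Omega:=\{X:\|X\|_2\le1+\frac1{12}\}$ and $M_2:=\sup_{X\ne Y\in\Omega}\frac{\|\nabla g(X)-\nabla g(Y)\|_F}{\|X-Y\|_F}$. *)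

From HB Require Import structures.
From mathcomp Require Import all_boot all_order all_algebra.
From mathcomp Require Import all_classical all_reals all_analysis.
Set Implicit Arguments. Unset Strict Implicit. Unset Printing Implicit Defensive.
Import Order.TTheory GRing.Theory Num.Theory.
Import numFieldNormedType.Exports.
Local Open Scope classical_set_scope.
Local Open Scope ring_scope.

Section Defs.
Variables (R : realType) (n p : nat).
Notation Mnp := 'M[R]_(n, p).

Definition frob_inner (m k : nat) (A B : 'M[R]_(m, k)) : R := \tr (A^T *m B).
Definition frob_norm (m k : nat) (A : 'M[R]_(m, k)) : R := Num.sqrt (frob_inner A A).

Definition Phi (M : 'M[R]_p) : 'M[R]_p := 2^-1 *: (M + M^T).

Definition stiefel (X : Mnp) : Prop := X^T *m X = 1%:M.
Definition tangent_sp (X D : Mnp) : Prop := Phi (D^T *m X) = 0.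
Definition normal_sp (X D : Mnp) : Prop :=
  exists L : 'M[R]_p, L^T = L /\ D = X *m L.

Definition Acal (X : Mnp) : 'M[R]_p := (3 / 2) *: 1%:M - (1 / 2) *: (X^T *m X).
Definition gfun (f : Mnp -> R) (X : Mnp) : R := f (X *m Acal X).
Definition hfun (f : Mnp -> R) (beta : R) (X : Mnp) : R :=
  gfun f X + beta / 4 * frob_norm (X^T *m X - 1%:M) ^+ 2.

Definition grad (F : Mnp -> R) (X : Mnp) : Mnp :=
  \matrix_(i, j) ('D_(delta_mx i j) F X).
Definition hess (F : Mnp -> R) (X D : Mnp) : Mnp := 'd (grad F) X D.

Definition spec_norm (X : Mnp) : R :=
  sup [set frob_norm (X *m v) | v in [set v : 'cV[R]_p | frob_norm v = 1]].
Definition Omega : set Mnp := [set X | spec_norm X <= 1 + 1 / 12].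

Definition M2 (f : Mnp -> R) : R :=
  sup [set r | exists X Y : Mnp, [/\ Omega X, Omega Y, X <> Y &
        r = frob_norm (grad (gfun f) X - grad (gfun f) Y) / frob_norm (X - Y)]].

Definition loc_lip_scal (F : Mnp -> R) : Prop :=
  forall X : Mnp, exists2 r : R, 0 < r & exists L : R, forall Y Z : Mnp,
    frob_norm (Y - X) < r -> frob_norm (Z - X) < r ->
    `|F Y - F Z| <= L * frob_norm (Y - Z).
Definition loc_lip_mx (F : Mnp -> Mnp) : Prop :=
  forall X : Mnp, exists2 r : R, 0 < r & exists L : R, forall Y Z : Mnp,
    frob_norm (Y - X) < r -> frob_norm (Z - X) < r ->
    frob_norm (F Y - F Z) <= L * frob_norm (Y - Z).
End Defs.

From HB Require Import structures.
From mathcomp Require Import all_boot all_order all_algebra.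
From mathcomp Require Import all_classical all_reals all_analysis.
From mathcomp Require Import ring lra.
Import Order.TTheory GRing.Theory Num.Theory.
Import numFieldNormedType.Exports.
Set Implicit Arguments. Unset Strict Implicit. Unset Printing Implicit Defensive.
Local Open Scope classical_set_scope.
Local Open Scope ring_scope.

(* At a critical point X of h on the Stiefel manifold, A(X) = I and the penalty
   gradient vanishes, so grad h(X) = 0 forces grad f(X) = X S with S symmetric.
   Along a normal direction D2 = X L the differential of Y |-> Y A(Y) vanishes, so
   the second derivative of f drops out and hess h(X)[D2] = hess g(X)[D2] + 2 beta D2.
   Paired with a tangent D1, every remaining term is tr(D1^T X K) with D1^T X skew and
   K symmetric, hence 0.  Paired with D2, <D2, hess g(X)[D2]> >= -M2 |D2|^2 because
   grad g is M2-Lipschitz on Omega, a neighbourhood of X; M2 bounds these difference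
   quotients since grad g is locally Lipschitz and Omega is compact. *)
Section Frobenius.
Variable R : realType.
Variables m k : nat.
Implicit Types A B C : 'M[R]_(m, k).

Lemma frob_innerE A B : frob_inner A B = \sum_i \sum_j A i j * B i j.
Proof.
rewrite /frob_inner /mxtrace exchange_big /=; apply: eq_bigr => j _.
by rewrite !mxE; apply: eq_bigr => i _; rewrite mxE.
Qed.

Lemma frob_innerC A B : frob_inner A B = frob_inner B A.
Proof. by rewrite !frob_innerE; apply: eq_bigr => i _; apply: eq_bigr => j _; rewrite mulrC. Qed.

Lemma frob_innerDr A B C : frob_inner A (B + C) = frob_inner A B + frob_inner A C.
Proof. by rewrite /frob_inner mulmxDr mxtraceD. Qed.

Lemma frob_innerZr A B c : frob_inner A (c *: B) = c * frob_inner A B.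
Proof. by rewrite /frob_inner -scalemxAr mxtraceZ. Qed.

Lemma frob_innerNr A B : frob_inner A (- B) = - frob_inner A B.
Proof. by rewrite -scaleN1r frob_innerZr mulN1r. Qed.

Lemma frob_innerBr A B C : frob_inner A (B - C) = frob_inner A B - frob_inner A C.
Proof. by rewrite frob_innerDr frob_innerNr. Qed.

Lemma frob_inner0r A : frob_inner A 0 = 0.
Proof. by rewrite /frob_inner mulmx0 linear0. Qed.

Lemma frob_innerDl A B C : frob_inner (B + C) A = frob_inner B A + frob_inner C A.
Proof. by rewrite !(frob_innerC _ A) frob_innerDr. Qed.

Lemma frob_innerZl A B c : frob_inner (c *: A) B = c * frob_inner A B.
Proof. by rewrite !(frob_innerC _ B) frob_innerZr. Qed.

Lemma frob_innerNl A B : frob_inner (- A) B = - frob_inner A B.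
Proof. by rewrite !(frob_innerC _ B) frob_innerNr. Qed.

Lemma frob_innerBl A B C : frob_inner (B - C) A = frob_inner B A - frob_inner C A.
Proof. by rewrite frob_innerDl frob_innerNl. Qed.

Lemma frob_inner0l A : frob_inner 0 A = 0.
Proof. by rewrite frob_innerC frob_inner0r. Qed.

Lemma frob_inner_delta A i j : frob_inner A (delta_mx i j) = A i j.
Proof.
rewrite frob_innerE (bigD1 i) //= [X in _ + X]big1 => [|i' ne]; last first.
  by rewrite big1 // => j' _; rewrite mxE (negbTE ne) mulr0.
rewrite addr0 (bigD1 j) //= big1 => [|j' ne]; last by rewrite mxE eqxx (negbTE ne) mulr0.
by rewrite mxE !eqxx mulr1 addr0.
Qed.

Lemma frob_inner_ge0 A : 0 <= frob_inner A A.
Proof.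
by rewrite frob_innerE sumr_ge0 // => i _; rewrite sumr_ge0 // => j _; rewrite -expr2 sqr_ge0.
Qed.

Lemma frob_inner_eq0 A : (frob_inner A A == 0) = (A == 0).
Proof.
apply/idP/eqP => [|->]; last by rewrite frob_inner0l.
rewrite frob_innerE psumr_eq0 => [/allP A0|i _]; last first.
  by rewrite sumr_ge0 // => j _; rewrite -expr2 sqr_ge0.
apply/matrixP => i j; have /implyP := A0 i (mem_index_enum _).
rewrite psumr_eq0 => [/(_ isT)/allP/(_ j (mem_index_enum _))|j' _]; last first.
  by rewrite -expr2 sqr_ge0.
by rewrite mxE -expr2 sqrf_eq0 => /eqP.
Qed.

Lemma frob_inner_CauchySchwarz A B :
  frob_inner A B ^+ 2 <= frob_inner A A * frob_inner B B.
Proof.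
have [/eqP|AA0] := eqVneq (frob_inner A A) 0.
  by rewrite frob_inner_eq0 => /eqP ->; rewrite !frob_inner0l expr0n mul0r.
have AA_gt0 : 0 < frob_inner A A by rewrite lt_def AA0 frob_inner_ge0.
have := frob_inner_ge0 (frob_inner A A *: B - frob_inner A B *: A).
rewrite !(frob_innerBl, frob_innerBr, frob_innerZl, frob_innerZr) (frob_innerC B A).
set a := frob_inner A A; set b := frob_inner A B; set c := frob_inner B B => H.
have : 0 <= a * (a * c - b ^+ 2) by move: H; congr (_ <= _); ring.
by rewrite pmulr_rge0 // subr_ge0.
Qed.

Lemma frob_norm_ge0 A : 0 <= frob_norm A.
Proof. exact: sqrtr_ge0. Qed.

Lemma sqr_frob_norm A : frob_norm A ^+ 2 = frob_inner A A.
Proof. by rewrite sqr_sqrtr // frob_inner_ge0. Qed.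

Lemma frob_norm0 : frob_norm (0 : 'M[R]_(m, k)) = 0.
Proof. by rewrite /frob_norm frob_inner0l sqrtr0. Qed.

Lemma frob_norm_gt0 A : A != 0 -> 0 < frob_norm A.
Proof. by move=> A0; rewrite sqrtr_gt0 lt_def frob_inner_eq0 A0 frob_inner_ge0. Qed.

Lemma frob_inner_norm_le A B : `|frob_inner A B| <= frob_norm A * frob_norm B.
Proof.
rewrite -ler_sqr ?nnegrE ?mulr_ge0 ?frob_norm_ge0 //.
by rewrite real_normK ?num_real // exprMn !sqr_frob_norm frob_inner_CauchySchwarz.
Qed.

Lemma frob_normD A B : frob_norm (A + B) <= frob_norm A + frob_norm B.
Proof.
rewrite -ler_sqr ?nnegrE ?addr_ge0 ?frob_norm_ge0 // sqrrD sqr_frob_norm.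
rewrite frob_innerDl !frob_innerDr (frob_innerC B A) -!sqr_frob_norm.
have := le_trans (ler_norm _) (frob_inner_norm_le A B); rewrite mulr2n; lra.
Qed.

Lemma frob_normZ A c : frob_norm (c *: A) = `|c| * frob_norm A.
Proof.
by rewrite /frob_norm frob_innerZl frob_innerZr mulrA -expr2 sqrtrM ?sqr_ge0 // sqrtr_sqr.
Qed.

Lemma frob_normN A : frob_norm (- A) = frob_norm A.
Proof. by rewrite -scaleN1r frob_normZ normrN1 mul1r. Qed.

Lemma frob_distC A B : frob_norm (A - B) = frob_norm (B - A).
Proof. by rewrite -frob_normN opprB. Qed.

Lemma frob_normT A : frob_norm A^T = frob_norm A.
Proof. by rewrite /frob_norm /frob_inner trmxK mxtrace_mulC. Qed.

End Frobenius.

Lemma sum_CauchySchwarz (R : realType) (k : nat) (x y : 'I_k -> R) :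
  (\sum_l x l * y l) ^+ 2 <= (\sum_l x l * x l) * (\sum_l y l * y l).
Proof.
have := frob_inner_CauchySchwarz (\row_l x l : 'M[R]_(1, k)) (\row_l y l).
by rewrite !frob_innerE !big_ord1; under eq_bigr do rewrite !mxE;
  under [X in _ <= X * _]eq_bigr do rewrite !mxE; under [X in _ <= _ * X]eq_bigr do rewrite !mxE.
Qed.

Lemma frob_normM (R : realType) (m k l : nat) (A : 'M[R]_(m, k)) (B : 'M[R]_(k, l)) :
  frob_norm (A *m B) <= frob_norm A * frob_norm B.
Proof.
rewrite -ler_sqr ?nnegrE ?mulr_ge0 ?frob_norm_ge0 // exprMn !sqr_frob_norm !frob_innerE.
rewrite big_distrl /=; apply: ler_sum => i _.
rewrite [X in _ * X]exchange_big big_distrr /=; apply: ler_sum => j _.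
by rewrite mxE -expr2 (sum_CauchySchwarz (fun q => A i q) (fun q => B q j)).
Qed.

Section MatrixCalculus.
Variable R : realType.
Variable V : normedModType R.

Lemma is_diff_coord m k (M : 'M[R]_(m, k)) i j :
  is_diff M (fun N : 'M[R]_(m, k) => N i j) (fun N => N i j).
Proof.
have lin : linear (fun N : 'M[R]_(m, k) => N i j : R^o) by move=> a u v; rewrite !mxE.
pose L : {linear 'M[R]_(m, k) -> R^o} := HB.pack (fun N : 'M[R]_(m, k) => N i j : R^o)
  (GRing.isLinear.Build _ _ _ _ _ lin).
apply: DiffDef; first exact: differentiable_coord.
by rewrite (diff_lin (f := L)) //; apply: coord_continuous.
Qed.

Lemma is_diff_entry m k (M dM : V -> 'M[R]_(m, k)) x i j :
  is_diff x M dM -> is_diff x (fun y => M y i j) (fun d => dM d i j).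
Proof. by move=> HM; have := is_diff_comp HM (is_diff_coord (M x) i j). Qed.

Lemma is_diff_sum (W : normedModType R) k (F dF : 'I_k -> V -> W) x :
  (forall l, is_diff x (F l) (dF l)) ->
  is_diff x (fun y => \sum_l F l y) (fun d => \sum_l dF l d).
Proof.
elim: k F dF => [|k IH] F dF H.
  by under eq_fun do rewrite big_ord0; under [X in is_diff _ _ X]eq_fun do rewrite big_ord0;
     exact: is_diff_cst.
under eq_fun do rewrite big_ord_recr; under [X in is_diff _ _ X]eq_fun do rewrite big_ord_recr.
exact: is_diffD (IH _ _ (fun l => H _)) (H ord_max).
Qed.

Lemma is_diffZl (W : normedModType R) (c dc : V -> R) (C : W) x :
  is_diff x c dc -> is_diff x (fun y => c y *: C) (fun d => dc d *: C).
Proof. by move=> Hc; apply: DiffDef; [exact: differentiableZl | rewrite diffZl // diff_val]. Qed.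

Lemma is_diff_entries m k (M dM : V -> 'M[R]_(m, k)) x :
  (forall i j, is_diff x (fun y => M y i j) (fun d => dM d i j)) -> is_diff x M dM.
Proof.
move=> H; have -> : M = (fun y => \sum_i \sum_j M y i j *: delta_mx i j).
  by apply/funext => y; rewrite {1}(matrix_sum_delta (M y)).
apply: is_diff_eq; first by do 2![apply: is_diff_sum => ?]; exact: is_diffZl.
by apply/funext => d; rewrite [RHS](matrix_sum_delta (dM d)).
Qed.

Lemma is_diff_mul (f g df dg : V -> R) x :
  is_diff x f df -> is_diff x g dg ->
  is_diff x (fun y => f y * g y) (fun d => df d * g x + f x * dg d).
Proof.
move=> Hf Hg; apply: is_diff_eq (is_diffM Hf Hg) _.
by apply/funext => d; rewrite !fctE /= addrC mulrC.
Qed.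

Lemma is_diff_mulmx m k l (A dA : V -> 'M[R]_(m, k)) (B dB : V -> 'M[R]_(k, l)) x :
  is_diff x A dA -> is_diff x B dB ->
  is_diff x (fun y => A y *m B y) (fun d => dA d *m B x + A x *m dB d).
Proof.
move=> HA HB; apply: is_diff_entries => i j.
under eq_fun do rewrite mxE; under [X in is_diff _ _ X]eq_fun do rewrite !mxE -big_split.
by apply: is_diff_sum => q; apply: is_diff_mul; apply: is_diff_entry.
Qed.

Lemma is_diff_trmx m k (A dA : V -> 'M[R]_(m, k)) x :
  is_diff x A dA -> is_diff x (fun y => (A y)^T) (fun d => (dA d)^T).
Proof.
move=> HA; apply: is_diff_entries => i j.
by under eq_fun do rewrite mxE; under [X in is_diff _ _ X]eq_fun do rewrite mxE;
  exact: is_diff_entry.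
Qed.

Lemma is_diff_trace m (A dA : V -> 'M[R]_m) x :
  is_diff x A dA -> is_diff x (fun y => \tr (A y)) (fun d => \tr (dA d)).
Proof. by move=> HA; apply: is_diff_sum => i; exact: is_diff_entry. Qed.

End MatrixCalculus.

Section Adjoint.
Variable R : realType.

Lemma frob_inner_mulmxr m k l (A : 'M[R]_(m, l)) (B : 'M[R]_(m, k)) (C : 'M[R]_(k, l)) :
  frob_inner A (B *m C) = frob_inner (B^T *m A) C.
Proof. by rewrite /frob_inner trmx_mul trmxK mulmxA. Qed.

Lemma frob_inner_mulmxl m k l (A : 'M[R]_(m, l)) (B : 'M[R]_(m, k)) (C : 'M[R]_(k, l)) :
  frob_inner A (B *m C) = frob_inner (A *m C^T) B.
Proof. by rewrite /frob_inner trmx_mul trmxK mulmxA mxtrace_mulC mulmxA. Qed.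

Lemma frob_inner_trmx m k (A : 'M[R]_(m, k)) (B : 'M[R]_(k, m)) :
  frob_inner A B^T = frob_inner A^T B.
Proof. by rewrite /frob_inner trmxK -trmx_mul mxtrace_tr mxtrace_mulC. Qed.

Lemma mxtrace_skew_sym m (A K : 'M[R]_m) : A^T = - A -> K^T = K -> \tr (A *m K) = 0.
Proof.
move=> skA symK; have : \tr (A *m K) = - \tr (A *m K).
  by rewrite -{1}mxtrace_tr trmx_mul skA symK mulmxN linearN /= mxtrace_mulC.
by move/eqP; rewrite -addr_eq0 -mulr2n mulrn_eq0 /= => /eqP.
Qed.

End Adjoint.

Section Gradient.
Variable R : realType.
Variables n p : nat.
Notation Mnp := 'M[R]_(n, p).

Lemma diff_frob_inner_grad (phi : Mnp -> R) Y : differentiable phi Y ->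
  'd phi Y = frob_inner (grad phi Y) :> (Mnp -> R).
Proof.
move=> dphi; apply/funext => D; rewrite {1}(matrix_sum_delta D) linear_sum frob_innerE.
apply: eq_bigr => i _; rewrite linear_sum; apply: eq_bigr => j _.
by rewrite linearZ mxE deriveE // mulrC.
Qed.

Lemma grad_is_diff (phi : Mnp -> R) Y (G : Mnp) :
  is_diff Y phi (frob_inner G) -> grad phi Y = G.
Proof.
move=> dphi; apply/matrixP => i j.
by rewrite mxE deriveE ?diff_val ?frob_inner_delta //; case: dphi.
Qed.

End Gradient.

Section ConstraintDissolving.
Variable R : realType.
Variables n p : nat.
Notation Mnp := 'M[R]_(n, p).
Implicit Types Y W D : Mnp.

(* [dXA Y] is the differential at Y of the map Y |-> Y A(Y), [dXA_adj Y] its adjoint. *)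
Definition dXA Y D : Mnp := D *m Acal Y - (1/2) *: (Y *m (D^T *m Y + Y^T *m D)).

Definition dXA_adj Y W : Mnp :=
  (3/2) *: W - (1/2) *: (W *m (Y^T *m Y) + Y *m (W^T *m Y) + Y *m (Y^T *m W)).

Definition grad_pen (beta : R) Y : Mnp := beta *: (Y *m (Y^T *m Y - 1%:M)).

Lemma is_diff_gram Y :
  is_diff Y (fun Z : Mnp => Z^T *m Z) (fun D => D^T *m Y + Y^T *m D).
Proof. exact: is_diff_mulmx (is_diff_trmx (is_diff_id _)) (is_diff_id _). Qed.

Lemma is_diff_gramB1 Y :
  is_diff Y (fun Z : Mnp => Z^T *m Z - 1%:M) (fun D => D^T *m Y + Y^T *m D).
Proof. by apply: is_diff_eq (is_diffB (is_diff_gram Y) (is_diff_cst _ _)) _; rewrite subr0. Qed.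

Lemma is_diff_XA Y : is_diff Y (fun Z => Z *m Acal Z) (dXA Y).
Proof.
have HA : is_diff Y (@Acal R n p) (fun D => - ((1/2) *: (D^T *m Y + Y^T *m D))).
  apply: is_diff_eq (is_diffB (is_diff_cst _ _) (is_diffZ _ (is_diff_gram Y))) _.
  by apply/funext => D; rewrite !fctE sub0r.
apply: is_diff_eq (is_diff_mulmx (is_diff_id _) HA) _.
by apply/funext => D; rewrite mulmxN -scalemxAr.
Qed.

Lemma frob_inner_dXA Y W D : frob_inner W (dXA Y D) = frob_inner (dXA_adj Y W) D.
Proof.
have e1 : frob_inner W (D *m (Y^T *m Y)) = frob_inner (W *m (Y^T *m Y)) D.
  by rewrite frob_inner_mulmxl trmx_mul trmxK.
have e2 : frob_inner W (Y *m (D^T *m Y)) = frob_inner (Y *m (W^T *m Y)) D.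
  by rewrite frob_inner_mulmxr frob_inner_mulmxl frob_inner_trmx !trmx_mul !trmxK mulmxA.
have e3 : frob_inner W (Y *m (Y^T *m D)) = frob_inner (Y *m (Y^T *m W)) D.
  by rewrite !frob_inner_mulmxr trmxK.
rewrite /dXA /Acal /dXA_adj mulmxBr -!scalemxAr mulmx1 mulmxDr.
rewrite !(frob_innerBr, frob_innerDr, frob_innerZr, frob_innerBl, frob_innerDl, frob_innerZl).
rewrite e1 e2 e3 (frob_innerC W D); lra.
Qed.

Lemma is_diff_gfun (f : Mnp -> R) Y : differentiable f (Y *m Acal Y) ->
  is_diff Y (gfun f) (frob_inner (dXA_adj Y (grad f (Y *m Acal Y)))).
Proof.
move=> df; apply: is_diff_eq (is_diff_comp (is_diff_XA Y) (differentiableP df)) _.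
by apply/funext => D; rewrite /= diff_frob_inner_grad // frob_inner_dXA.
Qed.

Lemma grad_gfun (f : Mnp -> R) Y : differentiable f (Y *m Acal Y) ->
  grad (gfun f) Y = dXA_adj Y (grad f (Y *m Acal Y)).
Proof. by move=> df; apply/grad_is_diff/is_diff_gfun. Qed.

Lemma is_diff_pen (beta : R) Y :
  is_diff Y (fun Z : Mnp => beta / 4 * frob_norm (Z^T *m Z - 1%:M) ^+ 2)
    (frob_inner (grad_pen beta Y)).
Proof.
set C := Y^T *m Y - 1%:M.
have CT : C^T = C by rewrite /C linearB /= trmx_mul trmxK trmx1.
under eq_fun do rewrite sqr_frob_norm.
have HC := is_diff_gramB1 Y.
apply: is_diff_eq (is_diffZ _ (is_diff_trace (is_diff_mulmx (is_diff_trmx HC) HC))) _.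
have e1 D : frob_inner C (D^T *m Y) = frob_inner (Y *m C) D.
  by rewrite frob_inner_mulmxl frob_inner_trmx trmx_mul trmxK CT.
have e2 D : frob_inner C (Y^T *m D) = frob_inner (Y *m C) D.
  by rewrite frob_inner_mulmxr trmxK.
apply/funext => D; rewrite !fctE /= mxtraceD.
rewrite -[\tr (_ *m C)]/(frob_inner _ _) -[\tr (C^T *m _)]/(frob_inner _ _).
rewrite (frob_innerC _ C) !frob_innerDr e1 e2 /grad_pen frob_innerZl -/C.
by rewrite -[_ *: _]/(beta / 4 * _); lra.
Qed.

Lemma grad_hfun (f : Mnp -> R) beta Y : differentiable f (Y *m Acal Y) ->
  grad (hfun f beta) Y = grad (gfun f) Y + grad_pen beta Y.
Proof.
move=> df; rewrite grad_gfun //; apply: grad_is_diff.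
apply: is_diff_eq (is_diffD (is_diff_gfun df) (is_diff_pen beta Y)) _.
by apply/funext => D; rewrite frob_innerDl.
Qed.

End ConstraintDissolving.

Section Hessian.
Variable R : realType.
Variables n p : nat.
Notation Mnp := 'M[R]_(n, p).
Implicit Types Y W D : Mnp.

(* the derivative of [Y |-> dXA_adj Y W] at Y along D, for fixed W *)
Definition dXA_adj_diff Y W D : Mnp :=
  - (1/2) *: (W *m (D^T *m Y + Y^T *m D) + (D *m (W^T *m Y) + Y *m (W^T *m D))
              + (D *m (Y^T *m W) + Y *m (D^T *m W))).

Definition dgrad_pen (beta : R) Y D : Mnp :=
  beta *: (D *m (Y^T *m Y - 1%:M) + Y *m (D^T *m Y + Y^T *m D)).

Lemma is_diff_dXA_adj (G dG : Mnp -> Mnp) Y : is_diff Y G dG ->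
  is_diff Y (fun Z => dXA_adj Z (G Z)) (fun D => dXA_adj_diff Y (G Y) D + dXA_adj Y (dG D)).
Proof.
move=> HG; have HY := is_diff_id Y.
apply: is_diff_eq.
  apply: is_diffB (is_diffZ _ HG) (is_diffZ _ (is_diffD (is_diffD _ _) _)).
  - exact: is_diff_mulmx HG (is_diff_gram Y).
  - exact: is_diff_mulmx HY (is_diff_mulmx (is_diff_trmx HG) HY).
  - exact: is_diff_mulmx HY (is_diff_mulmx (is_diff_trmx HY) HG).
apply/funext => D; rewrite !fctE /dXA_adj_diff /dXA_adj /= !mulmxDr.
rewrite scaleNr [RHS]addrCA -opprD -scalerDr; congr (_ - _ *: _).
by rewrite !addrA [LHS](ACl (2*3*4*6*7*8*1*5*9)).
Qed.

Lemma is_diff_grad_pen beta Y : is_diff Y (grad_pen beta) (dgrad_pen beta Y).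
Proof. exact: is_diffZ _ (is_diff_mulmx (is_diff_id Y) (is_diff_gramB1 Y)). Qed.

Variable f : Mnp -> R.
Hypothesis df : forall Y, differentiable f Y.

Lemma is_diff_grad_gfun X : differentiable (grad f) (X *m Acal X) ->
  is_diff X (grad (gfun f)) (fun D => dXA_adj_diff X (grad f (X *m Acal X)) D
                                      + dXA_adj X ('d (grad f) (X *m Acal X) (dXA X D))).
Proof.
move=> dgf; have -> : grad (gfun f) = fun Y => dXA_adj Y (grad f (Y *m Acal Y)).
  by apply/funext => Y; rewrite grad_gfun.
exact/is_diff_dXA_adj/(is_diff_comp (is_diff_XA X) (differentiableP dgf)).
Qed.

Lemma hess_hfun beta X D : differentiable (grad f) (X *m Acal X) ->
  hess (hfun f beta) X D = 'd (grad (gfun f)) X D + dgrad_pen beta X D.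
Proof.
move=> dgf; rewrite /hess.
have -> : grad (hfun f beta) = fun Y => grad (gfun f) Y + grad_pen beta Y.
  by apply/funext => Y; rewrite grad_hfun.
have [dgg _] := is_diff_grad_gfun dgf.
have H : is_diff X (fun Y => grad (gfun f) Y + grad_pen beta Y)
    (fun D => 'd (grad (gfun f)) X D + dgrad_pen beta X D).
  exact: is_diffD (differentiableP dgg) (is_diff_grad_pen beta X).
exact: (congr1 (fun F : Mnp -> Mnp => F D) (diff_val (is_diff_def := H))).
Qed.

End Hessian.

Section StiefelPoint.
Variable R : realType.
Variables n p : nat.
Notation Mnp := 'M[R]_(n, p).
Notation Mp := 'M[R]_p.
Variable X : Mnp.
Hypothesis stX : stiefel X.

Lemma tangent_sp_skew D1 : tangent_sp X D1 -> (D1^T *m X)^T = - (D1^T *m X).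
Proof.
rewrite /tangent_sp /Phi => /eqP; rewrite scaler_eq0 invr_eq0 pnatr_eq0 /=.
by rewrite addrC addr_eq0 => /eqP.
Qed.

Lemma frob_inner_tangent_normal D1 (L : Mp) : tangent_sp X D1 -> L^T = L ->
  frob_inner D1 (X *m L) = 0.
Proof. by move=> /tangent_sp_skew skA symL; rewrite /frob_inner mulmxA mxtrace_skew_sym. Qed.

Lemma Acal_stiefel : Acal X = 1%:M.
Proof. by rewrite /Acal stX -scalerBl (_ : (3/2 : R) - 1/2 = 1) ?scale1r //; lra. Qed.

Lemma XA_stiefel : X *m Acal X = X.
Proof. by rewrite Acal_stiefel mulmx1. Qed.

Lemma stiefel_mulmxK (K : Mp) : X^T *m (X *m K) = K.
Proof. by rewrite mulmxA stX mul1mx. Qed.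

Lemma stiefel_trmx_mulmxK (K : Mp) : (X *m K)^T *m X = K^T.
Proof. by rewrite trmx_mul -mulmxA stX mulmx1. Qed.

Lemma stiefel_trmx_mulmxKK (K1 K2 : Mp) : (X *m K1)^T *m (X *m K2) = K1^T *m K2.
Proof. by rewrite trmx_mul -mulmxA stiefel_mulmxK. Qed.

Lemma dXA_normal (L : Mp) : L^T = L -> dXA X (X *m L) = 0.
Proof.
move=> symL; rewrite /dXA Acal_stiefel mulmx1 stiefel_trmx_mulmxK stiefel_mulmxK symL.
rewrite scalemxAr scalerDr -scalerDl (_ : (1/2 : R) + 1/2 = 1) ?scale1r ?subrr //; lra.
Qed.

Lemma diff_grad_gfun_normal (f : Mnp -> R) (L : Mp) :
  (forall Y, differentiable f Y) -> differentiable (grad f) X -> L^T = L ->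
  'd (grad (gfun f)) X (X *m L) = dXA_adj_diff X (grad f X) (X *m L).
Proof.
move=> df dgf symL; have dgf' : differentiable (grad f) (X *m Acal X) by rewrite XA_stiefel.
rewrite (diff_val (is_diff_def := is_diff_grad_gfun df dgf')) /= XA_stiefel dXA_normal //.
by rewrite linear0 /dXA_adj !(scaler0, mul0mx, trmx0, mulmx0, addr0, subr0).
Qed.

Lemma dgrad_pen_normal beta (L : Mp) : L^T = L ->
  dgrad_pen beta X (X *m L) = (2 * beta) *: (X *m L).
Proof.
move=> symL; rewrite /dgrad_pen stX subrr mulmx0 add0r.
rewrite stiefel_trmx_mulmxK stiefel_mulmxK symL mulmxDr scalerDr -scalerDl.
by congr (_ *: _); lra.
Qed.

Lemma frob_inner_dXA_adj_diff_normal D1 (S L : Mp) :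
  tangent_sp X D1 -> S^T = S -> L^T = L ->
  frob_inner D1 (dXA_adj_diff X (X *m S) (X *m L)) = 0.
Proof.
move=> tD1 symS symL; rewrite /dXA_adj_diff !stiefel_trmx_mulmxKK.
rewrite !stiefel_trmx_mulmxK !stiefel_mulmxK symS symL -!mulmxA -!mulmxDr scalemxAr.
(* what is left is X K with K a multiple of S L + L S, a symmetric matrix *)
rewrite frob_inner_tangent_normal // linearZ /= !linearD /= !trmx_mul symS symL.
by rewrite !addrA [in RHS](ACl (3*5*1*6*2*4)).
Qed.

Lemma stationary_grad_sym (f : Mnp -> R) beta :
  differentiable f X -> grad (hfun f beta) X = 0 ->
  exists2 S : Mp, S^T = S & grad f X = X *m S.
Proof.
move=> df; rewrite grad_hfun ?XA_stiefel // grad_gfun ?XA_stiefel //.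
rewrite /grad_pen stX subrr mulmx0 scaler0 addr0 /dXA_adj stX mulmx1.
set W := grad f X => W0.
exists ((1/2 : R) *: (W^T *m X + X^T *m W)).
  by rewrite linearZ /= linearD /= !trmx_mul !trmxK addrC.
rewrite -scalemxAr mulmxDr; move: W0; rewrite -addrA.
set a := X *m (W^T *m X) + X *m (X^T *m W).
rewrite scalerDr opprD addrA -scalerBl (_ : (3/2 : R) - 1/2 = 1) ?scale1r; last by lra.
by move/eqP; rewrite subr_eq0 => /eqP.
Qed.

End StiefelPoint.

Section LowerBound.
Variable R : realType.
Variables n p : nat.
Notation Mnp := 'M[R]_(n, p).

Lemma frob_inner_diff_ge (G : Mnp -> Mnp) (K : set Mnp) (X D : Mnp) (M : R) :
  nbhs X K -> differentiable G X ->
  (forall Y, K Y -> frob_norm (G Y - G X) <= M * frob_norm (Y - X)) ->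
  - (M * frob_norm D ^+ 2) <= frob_inner D ('d G X D).
Proof.
move=> KX dG lipG; pose phi Y := frob_inner D (G Y).
have Hphi : is_diff X phi (fun d => frob_inner D ('d G X d)).
  apply: is_diff_eq (is_diff_trace (is_diff_mulmx (is_diff_cst D^T X) (differentiableP dG))) _.
  by apply/funext => d; rewrite fctE mul0mx add0r.
have [dphi _] := Hphi.
rewrite -[frob_inner D _]/((fun d => frob_inner D ('d G X d)) D).
rewrite -(diff_val (is_diff_def := Hphi)) -deriveE // /derive.
apply: limr_ge; first exact: diff_derivable.
have KhD : \forall h \near (0 : R)^', K (h *: D + X).
  apply: nbhs_dnbhs; have : (fun h : R => h *: D + X) @ 0 --> (0 : R) *: D + X.
    apply: (@cvgD _ _ _ _ _ (fun h : R => h *: D) (fun=> X)).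
      exact: cvgZr_tmp.
    exact: cvg_cst.
  by rewrite scale0r add0r; apply.
near=> h.
have h0 : h != 0 by near: h; exact: nbhs_dnbhs_neq.
have Kh : K (h *: D + X) by near: h.
have bd : `|frob_inner D (G (h *: D + X) - G X)| <= `|h| * (M * frob_norm D ^+ 2).
  apply: le_trans (frob_inner_norm_le _ _) _.
  apply: le_trans (ler_wpM2l (frob_norm_ge0 D) (lipG _ Kh)) _.
  by rewrite addrK frob_normZ le_eqVlt; apply/orP; left; apply/eqP; ring.
have : `|h^-1 * frob_inner D (G (h *: D + X) - G X)| <= M * frob_norm D ^+ 2.
  by rewrite normrM normrV ?unitfE // mulrC ler_pdivrMr ?normr_gt0 // mulrC.
by rewrite ler_norml /phi -frob_innerBr => /andP[].
Unshelve. all: by end_near.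
Qed.

End LowerBound.

Section LocallyLipschitz.
Variable R : realType.
Notation N := frob_norm.

Definition locally_lipschitz m k a b (G : 'M[R]_(m, k) -> 'M[R]_(a, b)) :=
  forall X, exists2 r : R, 0 < r & exists2 L : R, 0 <= L & forall Y Z,
    N (Y - X) < r -> N (Z - X) < r -> N (G Y - G Z) <= L * N (Y - Z).

Variables m k : nat.
Notation Mmk := 'M[R]_(m, k).

Lemma loc_lip_mx_locally_lipschitz (F : Mmk -> Mmk) : loc_lip_mx F -> locally_lipschitz F.
Proof.
move=> H X; have [r r0 [L hL]] := H X; exists r => //; exists `|L| => // Y Z hY hZ.
apply: le_trans (hL Y Z hY hZ) _.
by apply: ler_wpM2r; [exact: frob_norm_ge0 | exact: ler_norm].
Qed.

Lemma lipschitz_ball_bound a b (G : Mmk -> 'M[R]_(a, b)) X r L : 0 <= L ->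
  (forall Y Z, N (Y - X) < r -> N (Z - X) < r -> N (G Y - G Z) <= L * N (Y - Z)) ->
  forall Y, N (Y - X) < r -> N (G Y) <= N (G X) + L * r.
Proof.
move=> L0 lipG Y hY.
have hX : N (X - X) < r by rewrite subrr frob_norm0 (le_lt_trans _ hY) ?frob_norm_ge0.
have := lipG Y X hY hX; have : N (G Y) <= N (G Y - G X) + N (G X).
  by apply: le_trans (frob_normD _ _); rewrite subrK.
have : L * N (Y - X) <= L * r by apply: ler_wpM2l => //; exact: ltW.
lra.
Qed.

Lemma locally_lipschitz_id : locally_lipschitz (fun Y : Mmk => Y).
Proof. by move=> X; exists 1 => //; exists 1 => // Y Z _ _; rewrite mul1r. Qed.

Lemma locally_lipschitz_cst a b (C : 'M[R]_(a, b)) : locally_lipschitz (fun _ : Mmk => C).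
Proof. by move=> X; exists 1 => //; exists 0 => // Y Z _ _; rewrite subrr frob_norm0 mul0r. Qed.

Lemma locally_lipschitzD a b (A B : Mmk -> 'M[R]_(a, b)) :
  locally_lipschitz A -> locally_lipschitz B -> locally_lipschitz (fun Y => A Y + B Y).
Proof.
move=> HA HB X; have [rA rA0 [LA LA0 hA]] := HA X; have [rB rB0 [LB LB0 hB]] := HB X.
exists (Num.min rA rB); first by rewrite lt_min rA0 rB0.
exists (LA + LB); first exact: addr_ge0.
move=> Y Z; rewrite !lt_min => /andP[yA yB] /andP[zA zB].
rewrite opprD addrACA mulrDl; apply: le_trans (frob_normD _ _) _.
by rewrite lerD ?hA ?hB.
Qed.

Lemma locally_lipschitzZ a b (A : Mmk -> 'M[R]_(a, b)) c :
  locally_lipschitz A -> locally_lipschitz (fun Y => c *: A Y).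
Proof.
move=> HA X; have [r r0 [L L0 hA]] := HA X; exists r => //.
exists (`|c| * L); first by rewrite mulr_ge0.
move=> Y Z hY hZ; rewrite -scalerBr frob_normZ -mulrA.
by apply: ler_wpM2l => //; exact: hA.
Qed.

Lemma locally_lipschitzB a b (A B : Mmk -> 'M[R]_(a, b)) :
  locally_lipschitz A -> locally_lipschitz B -> locally_lipschitz (fun Y => A Y - B Y).
Proof.
move=> HA /(locally_lipschitzZ (-1)) HB.
by have := locally_lipschitzD HA HB; under eq_fun do rewrite scaleN1r.
Qed.

Lemma locally_lipschitz_trmx a b (A : Mmk -> 'M[R]_(a, b)) :
  locally_lipschitz A -> locally_lipschitz (fun Y => (A Y)^T).
Proof.
move=> HA X; have [r r0 [L L0 hA]] := HA X; exists r => //; exists L => // Y Z hY hZ.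
by rewrite -linearB /= frob_normT hA.
Qed.

Lemma locally_lipschitz_mulmx a b c (A : Mmk -> 'M[R]_(a, b)) (B : Mmk -> 'M[R]_(b, c)) :
  locally_lipschitz A -> locally_lipschitz B -> locally_lipschitz (fun Y => A Y *m B Y).
Proof.
move=> HA HB X; have [rA rA0 [LA LA0 hA]] := HA X; have [rB rB0 [LB LB0 hB]] := HB X.
have bA := lipschitz_ball_bound LA0 hA; have bB := lipschitz_ball_bound LB0 hB.
set cA := N (A X) + LA * rA; set cB := N (B X) + LB * rB.
have cA0 : 0 <= cA by rewrite addr_ge0 ?frob_norm_ge0 // mulr_ge0 // ltW.
exists (Num.min rA rB); first by rewrite lt_min rA0 rB0.
exists (cA * LB + LA * cB).
  by rewrite addr_ge0 ?mulr_ge0 // addr_ge0 ?frob_norm_ge0 // mulr_ge0 // ltW.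
move=> Y Z; rewrite !lt_min => /andP[yA yB] /andP[zA zB].
rewrite -(subrK (A Y *m B Z) (A Y *m B Y)) -addrA -mulmxBr -mulmxBl mulrDl.
apply: le_trans (frob_normD _ _) _; apply: lerD.
  apply: le_trans (frob_normM _ _) _; rewrite -mulrA.
  by apply: ler_pM; [exact: frob_norm_ge0 | exact: frob_norm_ge0 | exact: bA | exact: hB].
apply: le_trans (frob_normM _ _) _; rewrite mulrAC.
by apply: ler_pM; [exact: frob_norm_ge0 | exact: frob_norm_ge0 | exact: hA | exact: bB].
Qed.

Lemma locally_lipschitz_comp a b c d
    (F : 'M[R]_(a, b) -> 'M[R]_(c, d)) (P : Mmk -> 'M[R]_(a, b)) :
  locally_lipschitz F -> locally_lipschitz P -> locally_lipschitz (fun Y => F (P Y)).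
Proof.
move=> HF HP X; have [rP rP0 [LP LP0 hP]] := HP X; have [rF rF0 [LF LF0 hF]] := HF (P X).
have c0 : 0 < rF / (LP + 1) by rewrite divr_gt0 // ltr_wpDl.
exists (Num.min rP (rF / (LP + 1))); first by rewrite lt_min rP0 c0.
exists (LF * LP); first exact: mulr_ge0.
have nearP Y : N (Y - X) < Num.min rP (rF / (LP + 1)) -> N (P Y - P X) < rF.
  rewrite lt_min => /andP[y1 y2]; have hX : N (X - X) < rP by rewrite subrr frob_norm0.
  apply: le_lt_trans (hP Y X y1 hX) _.
  rewrite ltr_pdivlMr ?ltr_wpDl // in y2; have := frob_norm_ge0 (Y - X); nra.
move=> Y Z hY hZ; apply: le_trans (hF _ _ (nearP Y hY) (nearP Z hZ)) _.
rewrite -mulrA; apply: ler_wpM2l => //; move: hY hZ; rewrite !lt_min => /andP[y1 _] /andP[z1 _].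
exact: hP.
Qed.

End LocallyLipschitz.

Section Compactness.
Variable R : realType.
Variables m k : nat.
Notation Mmk := 'M[R]_(m, k).
Notation N := frob_norm.

Lemma mx_norm_entry_le (A : Mmk) i j : `|A i j| <= `|A|.
Proof.
rewrite [leRHS]/Num.Def.normr /= mx_normrE.
exact: (le_bigmax _ (fun ij : 'I_m * 'I_k => `|A ij.1 ij.2|) (i, j)).
Qed.

Lemma frob_norm_entry_le (A : Mmk) i j : `|A i j| <= N A.
Proof.
have := frob_inner_norm_le A (delta_mx i j).
rewrite frob_inner_delta /frob_norm [frob_inner (delta_mx _ _) _]frob_inner_delta.
by rewrite mxE !eqxx sqrtr1 mulr1.
Qed.

Lemma frob_norm_le_mx_norm (A : Mmk) : N A <= ((m * k)%:R + 1) * `|A|.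
Proof.
rewrite -ler_sqr ?nnegrE ?frob_norm_ge0 ?mulr_ge0 ?addr_ge0 // sqr_frob_norm frob_innerE.
apply: (@le_trans _ _ (\sum_(i < m) \sum_(j < k) `|A| ^+ 2)).
  apply: ler_sum => i _; apply: ler_sum => j _.
  rewrite -expr2 -real_normK ?num_real // lerXn2r ?nnegrE //; exact: mx_norm_entry_le.
rewrite !sumr_const !card_ord -mulrnA [in leRHS]exprMn -[_ *+ (k * m)]mulr_natl.
apply: ler_wpM2r; first exact: sqr_ge0.
rewrite mulnC natrM; have : 0 <= (m%:R * k%:R : R) by rewrite mulr_ge0.
nra.
Qed.

Lemma nbhs_frob_lt (X : Mmk) (r : R) : 0 < r -> \forall Y \near X, N (Y - X) < r.
Proof.
move=> r0; have c0 : 0 < (m * k)%:R + 1 :> R by rewrite ltr_wpDl.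
apply: filterS (nbhsx_ballx X _ (divr_gt0 r0 c0)) => Y; rewrite -ball_normE /= => hY.
by apply: le_lt_trans (frob_norm_le_mx_norm _) _; rewrite -ltr_pdivlMl // mulrC -normrN opprB.
Qed.

Lemma locally_lipschitz_bounded a b (G : Mmk -> 'M[R]_(a, b)) (K : set Mmk) :
  compact K -> locally_lipschitz G -> exists B, forall Y, K Y -> N (G Y) <= B.
Proof.
move=> /(compact_near_coveringP K).1 cover lipG.
have : \forall B \near +oo, K `<=` (fun Y => N (G Y) <= B).
  apply: cover => X _; have [r r0 [L L0 lipGX]] := lipG X.
  near=> Y B.
  have hB : N (G X) + L * r <= B by near: B; apply: nbhs_pinfty_ge; exact: num_real.
  have hY : N (Y - X) < r by near: Y; exact: nbhs_frob_lt.
  exact: le_trans (lipschitz_ball_bound L0 lipGX hY) hB.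
by case/filter_ex => B hB; exists B.
Unshelve. all: by end_near.
Qed.

Lemma locally_lipschitz_compact a b (G : Mmk -> 'M[R]_(a, b)) (K : set Mmk) :
  compact K -> locally_lipschitz G ->
  exists L, forall Y Z, K Y -> K Z -> N (G Y - G Z) <= L * N (Y - Z).
Proof.
move=> cK lipG; have [B hB] := locally_lipschitz_bounded cK lipG.
have cover := (compact_near_coveringP K).1 cK.
have : \forall L \near +oo,
    K `<=` (fun Y => forall Z, K Z -> N (G Y - G Z) <= L * N (Y - Z)).
  apply: cover => X KX.
  have [r r0 [LX LX0 lipGX]] := lipG X.
  near=> Y L => Z KZ.
  have hL1 : LX <= L by near: L; apply: nbhs_pinfty_ge; exact: num_real.
  have hL2 : (2 * B + LX * r) / (r / 2) <= L by near: L; apply: nbhs_pinfty_ge; exact: num_real.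
  have hY : N (Y - X) < r / 2 by near: Y; apply: nbhs_frob_lt; lra.
  have nYZ := frob_norm_ge0 (Y - Z).
  have [hZ|hZ] := ltP (N (Z - X)) r.
    apply: le_trans (lipGX Y Z _ hZ) _; first lra.
    exact: ler_wpM2r.
  (* Z is outside the ball: both values of G are bounded and |Y - Z| >= r/2 *)
  have far : r / 2 <= N (Y - Z).
    have : N (Z - X) <= N (Z - Y) + N (Y - X).
      by apply: le_trans (frob_normD _ _); rewrite addrA subrK.
    rewrite (frob_distC Z Y); lra.
  have gY : N (G Y) <= B + LX * r.
    apply: le_trans (lipschitz_ball_bound LX0 lipGX _) _; first lra.
    by rewrite lerD2r; exact: hB.
  have gZ := hB Z KZ.
  have tri : N (G Y - G Z) <= N (G Y) + N (G Z).
    by apply: le_trans (frob_normD _ _) _; rewrite frob_normN.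
  have L0 : 0 <= L by lra.
  rewrite ler_pdivrMr ?divr_gt0 // in hL2.
  have : L * (r / 2) <= L * N (Y - Z) by exact: ler_wpM2l.
  by move: tri => /=; lra.
by case/filter_ex => L hL; exists L => Y Z KY KZ; exact: hL.
Unshelve. all: by end_near.
Qed.

End Compactness.

Section EntryBox.
Variable R : realType.
Variables m k : nat.

Lemma mx_norm_vec_mx (u : 'rV[R]_(m * k)) : `|vec_mx u : 'M[R]_(m, k)| <= `|u|.
Proof.
rewrite [leLHS]/Num.Def.normr /= mx_normrE.
by apply: bigmax_le => // -[i j] _ /=; rewrite mxE; exact: mx_norm_entry_le.
Qed.

Lemma continuous_vec_mx : continuous (fun u : 'rV[R]_(m * k) => (vec_mx u : 'M[R]_(m, k))).
Proof.
move=> v; apply/(@cvgrPdist_lt _ _ _ (nbhs v)) => e e0.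
apply: filterS (nbhsx_ballx v e e0) => w; rewrite -ball_normE /= => hw.
by apply: le_lt_trans hw; rewrite -linearB; exact: mx_norm_vec_mx.
Qed.

Definition entry_box (c : R) : set 'M[R]_(m, k) :=
  vec_mx @` [set v : 'rV[R]_(m * k) | forall i, `[- c, c]%classic (v ord0 i)].

Lemma entry_box_compact c : compact (entry_box c).
Proof.
apply: continuous_compact; first exact/continuous_subspaceT/continuous_vec_mx.
by apply: (@rV_compact _ _ (fun=> `[- c, c]%classic)) => _; exact: segment_compact.
Qed.

Lemma entry_boxP c (A : 'M[R]_(m, k)) : (forall i j, `|A i j| <= c) -> entry_box c A.
Proof.
move=> Ac; exists (mxvec A); last exact: mxvecK.
by case/mxvec_indexP => i j; rewrite mxvecE /= in_itv /= -ler_norml Ac.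
Qed.

End EntryBox.

Section Omega.
Variable R : realType.
Variables n p : nat.
Notation Mnp := 'M[R]_(n, p).
Notation N := frob_norm.

Lemma spec_norm_ge (Y : Mnp) (v : 'cV[R]_p) : N v = 1 -> N (Y *m v) <= spec_norm Y.
Proof.
move=> nv; apply: sup_upper_bound; last by exists v.
split; first by exists (N (Y *m v)), v.
exists (N Y) => _ [w /= nw <-].
by apply: le_trans (frob_normM _ _) _; rewrite nw mulr1.
Qed.

Lemma Omega_entry_box : @Omega R n p `<=` (entry_box 2 : set Mnp).
Proof.
move=> Y OY; apply: entry_boxP => i j.
have nv : N (delta_mx j ord0 : 'cV[R]_p) = 1.
  by rewrite /frob_norm frob_inner_delta mxE !eqxx sqrtr1.
have : `|Y i j| <= N (Y *m (delta_mx j ord0 : 'cV[R]_p)).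
  by rewrite -colE; apply: le_trans (frob_norm_entry_le _ i ord0); rewrite mxE.
move: (spec_norm_ge Y nv) OY; rewrite /Omega /=; lra.
Qed.

Lemma stiefel_frob_norm_mulmx (X : Mnp) (v : 'cV[R]_p) : stiefel X -> N (X *m v) = N v.
Proof. by move=> stX; rewrite /frob_norm frob_inner_mulmxr mulmxA stX mul1mx. Qed.

Lemma Omega_nbhs_stiefel (X : Mnp) : stiefel X -> nbhs X (@Omega R n p).
Proof.
move=> stX; apply: filterS (nbhs_frob_lt X (_ : 0 < 1 / 12)) => [Y hY|]; last by lra.
rewrite /Omega /= /spec_norm; set E := [set _ | _ in _].
have [->|/set0P E0] := eqVneq E set0; first by rewrite sup0; lra.
apply: ge_sup => // _ [v /= nv <-].
rewrite -[Y](subrK X) mulmxDl; apply: le_trans (frob_normD _ _) _.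
have : N ((Y - X) *m v) <= 1 / 12.
  by apply: le_trans (frob_normM _ _) _; rewrite nv mulr1; exact: ltW.
by rewrite (stiefel_frob_norm_mulmx v stX) nv; lra.
Qed.

Lemma locally_lipschitz_grad_gfun (f : Mnp -> R) :
  (forall Y, differentiable f Y) -> loc_lip_mx (grad f) -> locally_lipschitz (grad (gfun f)).
Proof.
move=> df /loc_lip_mx_locally_lipschitz lipgf.
have -> : grad (gfun f) = fun Y => dXA_adj Y (grad f (Y *m Acal Y)).
  by apply/funext => Y; rewrite grad_gfun.
have I : locally_lipschitz (fun Y : Mnp => Y) by exact: locally_lipschitz_id.
have A : locally_lipschitz (@Acal R n p).
  exact: locally_lipschitzB (locally_lipschitz_cst _)
    (locally_lipschitzZ _ (locally_lipschitz_mulmx (locally_lipschitz_trmx I) I)).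
have W : locally_lipschitz (fun Y => grad f (Y *m Acal Y)).
  exact: locally_lipschitz_comp lipgf (locally_lipschitz_mulmx I A).
apply: locally_lipschitzB (locally_lipschitzZ _ W) (locally_lipschitzZ _ _).
apply: locally_lipschitzD (locally_lipschitzD _ _) _.
- exact: locally_lipschitz_mulmx W (locally_lipschitz_mulmx (locally_lipschitz_trmx I) I).
- exact: locally_lipschitz_mulmx I (locally_lipschitz_mulmx (locally_lipschitz_trmx W) I).
- exact: locally_lipschitz_mulmx I (locally_lipschitz_mulmx (locally_lipschitz_trmx I) W).
Qed.

Lemma M2_lipschitz (f : Mnp -> R) :
  (forall Y, differentiable f Y) -> loc_lip_mx (grad f) ->
  forall Y Z, Omega Y -> Omega Z ->
    N (grad (gfun f) Y - grad (gfun f) Z) <= M2 f * N (Y - Z).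
Proof.
move=> df lipgf Y Z OY OZ.
have [L lipG] := locally_lipschitz_compact (@entry_box_compact R n p 2)
  (locally_lipschitz_grad_gfun df lipgf).
have [<-|YZ] := eqVneq Y Z; first by rewrite !subrr frob_norm0 mulr0.
rewrite -ler_pdivrMr ?frob_norm_gt0 ?subr_eq0 //.
apply: sup_upper_bound; last by exists Y, Z; split => //; exact/eqP.
split; first by exists (N (grad (gfun f) Y - grad (gfun f) Z) / N (Y - Z)), Y, Z;
  split => //; exact/eqP.
exists L => _ [Y' [Z' [OY' OZ' /eqP Y'Z' ->]]].
rewrite ler_pdivrMr ?frob_norm_gt0 ?subr_eq0 //.
by apply: lipG; exact: Omega_entry_box.
Qed.

End Omega.

Unset Implicit Arguments.

Theorem mainTheorem11 (R : realType) (n p : nat) (f : 'M[R]_(n, p) -> R) (beta : R) :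
  0 < beta ->
  (forall X : 'M[R]_(n, p), differentiable f X) ->
  loc_lip_scal f -> loc_lip_mx (grad f) ->
  (forall X : 'M[R]_(n, p), differentiable (grad f) X) ->
  forall X : 'M[R]_(n, p), stiefel X -> grad (hfun f beta) X = 0 ->
  forall D1 D2 : 'M[R]_(n, p), tangent_sp X D1 -> normal_sp X D2 ->
    (2 * beta - M2 f) * frob_norm D2 ^+ 2 <= frob_inner D2 (hess (hfun f beta) X D2)
    /\ frob_inner D1 (hess (hfun f beta) X D2) = 0.
Proof.
move=> _ df _ lipgf dgf X stX gradh0 D1 D2 tD1 [L [symL ->]].
have [S symS gradfX] := stationary_grad_sym stX (df X) gradh0.
have dgfX : differentiable (grad f) (X *m Acal X) by rewrite XA_stiefel.
have OmegaX := Omega_nbhs_stiefel stX.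
rewrite !hess_hfun // dgrad_pen_normal // !frob_innerDr !frob_innerZr; split.
  have [dgg _] := is_diff_grad_gfun df dgfX.
  have := frob_inner_diff_ge (X *m L) OmegaX dgg
    (fun Y OY => M2_lipschitz df lipgf OY (nbhs_singleton OmegaX)).
  rewrite -sqr_frob_norm; nra.
rewrite diff_grad_gfun_normal // gradfX frob_inner_dXA_adj_diff_normal //.
by rewrite frob_inner_tangent_normal // mulr0 addr0.
Qed.
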